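(* Let $G$ be a triangle-free graph. There exists a positive integer $r_0$ such that $\rho_o(G\square K_r)=\alpha_2(G)$ for every integer $r\geq r_0$.
   Context: All graphs are finite and simple. An open packing of $G$ is a set $P\subseteq V(G)$ whose vertices have pairwise disjoint open neighborhoods; $\rho_o(G)$ is the maximum size of an open packing. A set $S\subseteq V(G)$ is $2$-independent if $G[S]$ has maximum degree less than $2$; $\alpha_2(G)$ is the maximum size of a $2$-independent set. $K_r$ is the complete graph on $r$ vertices and $\square$ denotes the Cartesian product: $(g,h)\sim(g',h')$ iff ($gg'\in E(G)$, $h=h'$) or ($g=g'$, $hh'\in E(H)$). *)

From mathcomp Require Import all_boot.
Set Implicit Arguments. Unset Strict Implicit. Unset Printing Implicit Defensive.

Definition simple_graph (V : finType) (e : rel V) : Prop :=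
  symmetric e /\ irreflexive e.

Definition triangle_free (V : finType) (e : rel V) : Prop :=
  forall x y z : V, ~~ [&& e x y, e y z & e x z].

Definition open_nbhd (V : finType) (e : rel V) (v : V) : {set V} :=
  [set w | e v w].

Definition open_packing (V : finType) (e : rel V) (P : {set V}) : bool :=
  [forall u in P, forall v in P,
     (u != v) ==> [disjoint open_nbhd e u & open_nbhd e v]].

Definition rho_o (V : finType) (e : rel V) : nat :=
  \max_(P : {set V} | open_packing e P) #|P|.

Definition two_independent (V : finType) (e : rel V) (S : {set V}) : bool :=
  [forall v in S, #|[set w in S | e v w]| < 2].

Definition alpha2 (V : finType) (e : rel V) : nat :=
  \max_(S : {set V} | two_independent e S) #|S|.

Definition cartK (V : finType) (e : rel V) (r : nat) : rel (V * 'I_r) :=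
  fun x y => (e x.1 y.1 && (x.2 == y.2)) || ((x.1 == y.1) && (x.2 != y.2)).

From mathcomp Require Import all_boot.
Set Implicit Arguments. Unset Strict Implicit. Unset Printing Implicit Defensive.

(* Once r >= 3, two vertices (v, i), (v, j) of an open packing of G □ K_r
   would share a neighbour (v, k) in a third layer, so the projection to G is
   injective on a packing; and a packed (v, i) shares the neighbour (u, i)
   with any packed (u, j) such that u ~ v, which forces j = i, so v has at most
   one neighbour in the projection: the projection is 2-independent.
   Conversely, every component of G[S] for a 2-independent S is a vertex or an
   edge, so the closed neighbourhoods N_S[v] tell apart exactly the
   non-adjacent vertices of S.  With at least 2^|V| layers, put each v of S in
   the layer indexed by N_S[v]; two placed vertices could then only have a
   common neighbour through a triangle. *)

Lemma open_packingP (T : finType) (E : rel T) (P : {set T}) :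
  reflect (forall x y z, x \in P -> y \in P -> E x z -> E y z -> x = y)
          (open_packing E P).
Proof.
apply: (iffP forall_inP) => [HP x y z Px Py Exz Eyz | HP x Px].
  apply/eqP; apply: contraTT isT => Dxy.
  have /implyP/(_ Dxy) := forall_inP (HP x Px) y Py.
  by rewrite -setI_eq0 => /eqP/setP/(_ z); rewrite !inE Exz Eyz.
apply/forall_inP => y Py; apply/implyP => Dxy; rewrite -setI_eq0.
apply/eqP/setP => z; rewrite !inE; apply/negP => /andP [Exz Eyz].
by rewrite (HP x y z) ?eqxx in Dxy.
Qed.

Lemma two_independentP (T : finType) (E : rel T) (S : {set T}) :
  reflect (forall v u w, v \in S -> u \in S -> w \in S -> E v u -> E v w -> u = w)
          (two_independent E S).
Proof.
apply: (iffP forall_inP) => [HS v u w Sv Su Sw Evu Evw | HS v Sv].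
  by have /card_le1_eqP := HS v Sv; apply; rewrite inE ?Su ?Sw.
apply/card_le1_eqP => u w; rewrite !inE => /andP [Su Evu] /andP [Sw Evw].
exact: (HS v w u).
Qed.

Section CartesianWithComplete.

Variables (V : finType) (e : rel V).
Hypothesis e_sym : symmetric e.

Section Packing.

Variables (r : nat) (P : {set V * 'I_r}).
Hypothesis P_packing : open_packing (@cartK V e r) P.

Lemma packing_layer_nbr v u i j :
  (v, i) \in P -> (u, j) \in P -> e v u -> j = i.
Proof.
move=> Pvi Puj Evu; apply/eqP; apply: contraT => Dji.
have := open_packingP _ _ P_packing _ _ (u, i) Pvi Puj.
rewrite /cartK /= Evu Dji !eqxx orbT => /(_ isT isT) [_].
by move/eqP; rewrite eq_sym (negbTE Dji).
Qed.

Lemma packing_fst_inj : 2 < r -> {in P &, injective fst}.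
Proof.
move=> r_gt2 [v i] [u j] Pvi Puj /= Evu; subst u.
have /subsetPn [k _] : ~~ ([set: 'I_r] \subset [set i; j]).
  apply: contraTN r_gt2 => /subset_leq_card; rewrite cardsT card_ord -leqNgt.
  by move/leq_trans; apply; rewrite cards2 ltnS leq_b1.
rewrite !inE negb_or => /andP [Dki Dkj].
apply: (open_packingP _ _ P_packing _ _ (v, k)) => //; rewrite /cartK /= eqxx.
  by rewrite eq_sym Dki orbT.
by rewrite eq_sym Dkj orbT.
Qed.

Lemma packing_fst_two_independent : two_independent e (fst @: P).
Proof.
apply/two_independentP => x y z /imsetP [[v i] Pvi ->] /imsetP [[u j] Puj ->].
move=> /imsetP [[w k] Pwk ->] /= Evu Evw.
have Eji := packing_layer_nbr Pvi Puj Evu; have Eki := packing_layer_nbr Pvi Pwk Evw.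
subst j k; suff /(congr1 fst) : (u, i) = (w, i) by [].
apply: (open_packingP _ _ P_packing _ _ (v, i)) => //.
  by rewrite /cartK /= e_sym Evu eqxx.
by rewrite /cartK /= e_sym Evw eqxx.
Qed.

Lemma packing_card_le_alpha2 : 2 < r -> #|P| <= alpha2 e.
Proof.
move=> r_gt2; rewrite -(card_in_imset (packing_fst_inj r_gt2)).
exact: leq_bigmax_cond packing_fst_two_independent.
Qed.

End Packing.

Section Placement.

Variables (S : {set V}) (r : nat) (layer : V -> 'I_r).
Hypothesis layer_eq : {in S &, forall u v, u != v -> (layer u == layer v) = e u v}.

Definition placement := [set (v, layer v) | v in S].

Lemma card_placement : #|placement| = #|S|.
Proof. by apply: card_imset => u v [->]. Qed.

Lemma placement_open_packing :
  triangle_free e -> open_packing (@cartK V e r) placement.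
Proof.
move=> e_tf; apply/open_packingP => _ _ [w k] /imsetP [u Su ->] /imsetP [v Sv ->].
rewrite /cartK /=; have [-> //|Duv] := eqVneq u v; have Luv := layer_eq Su Sv Duv.
case/orP => [/andP [Euw /eqP Lu] | /andP [/eqP Euw /negP Lu]];
case/orP => [/andP [Evw /eqP Lv] | /andP [/eqP Evw /negP Lv]]; exfalso.
- by have := e_tf u v w; rewrite -Luv Lu Lv eqxx Evw Euw.
- by apply: Lv; rewrite -Lu eq_sym Luv Evw.
- by apply: Lu; rewrite -Lv Luv e_sym Euw.
- by rewrite Euw Evw eqxx in Duv.
Qed.

End Placement.

Section ClosedNeighbourhoodLayers.

Variable S : {set V}.
Hypothesis S_two_independent : two_independent e S.

Definition closed_nbhd_in v := [set w in S | (w == v) || e v w].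

Lemma closed_nbhd_in_sub u v :
  u \in S -> v \in S -> e u v -> closed_nbhd_in u \subset closed_nbhd_in v.
Proof.
move=> Su Sv Euv; apply/subsetP => w; rewrite !inE => /andP [Sw /orP [/eqP ->|Euw]].
  by rewrite Su e_sym Euv orbT.
by rewrite Sw (two_independentP _ _ S_two_independent u v w) ?eqxx.
Qed.

Lemma closed_nbhd_in_eq u v : u \in S -> v \in S -> u != v ->
  (closed_nbhd_in u == closed_nbhd_in v) = e u v.
Proof.
move=> Su Sv Duv; apply/idP/idP => [/eqP Nuv | Euv].
  have : u \in closed_nbhd_in v by rewrite -Nuv inE Su eqxx.
  by rewrite inE (negbTE Duv) => /andP [_]; rewrite e_sym.
by rewrite eqEsubset !closed_nbhd_in_sub // e_sym.
Qed.

Variables (r : nat) (r_large : #|{: {set V}}| <= r).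

Definition nbhd_layer v : 'I_r := widen_ord r_large (enum_rank (closed_nbhd_in v)).

Lemma nbhd_layer_eq :
  {in S &, forall u v, u != v -> (nbhd_layer u == nbhd_layer v) = e u v}.
Proof.
move=> u v Su Sv Duv; rewrite -closed_nbhd_in_eq //.
rewrite /nbhd_layer; apply/eqP/eqP => [Luv | -> //].
by apply: enum_rank_inj; apply: val_inj; exact: (congr1 val Luv).
Qed.

End ClosedNeighbourhoodLayers.

Lemma rho_o_cartK_le_alpha2 r : 2 < r -> rho_o (@cartK V e r) <= alpha2 e.
Proof. by move=> r_gt2; apply/bigmax_leqP => P /packing_card_le_alpha2; apply. Qed.

Lemma alpha2_le_rho_o_cartK r : triangle_free e -> #|{: {set V}}| <= r ->
  alpha2 e <= rho_o (@cartK V e r).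
Proof.
move=> e_tf r_large; apply/bigmax_leqP => S S2.
rewrite -(card_placement S (nbhd_layer S r_large)).
exact/leq_bigmax_cond/(placement_open_packing (nbhd_layer_eq S2 r_large) e_tf).
Qed.

End CartesianWithComplete.

Theorem mainTheorem7 (V : finType) (e : rel V) :
  simple_graph e -> triangle_free e ->
  exists r0 : nat, 0 < r0 /\
    forall r : nat, r0 <= r -> rho_o (@cartK V e r) = alpha2 e.
Proof.
move=> [e_sym _] e_tf; exists (maxn 3 #|{: {set V}}|); split; first by rewrite leq_max.
move=> r; rewrite geq_max => /andP [r_gt2 r_large]; apply/eqP; rewrite eqn_leq.
by rewrite rho_o_cartK_le_alpha2 // alpha2_le_rho_o_cartK.
Qed.
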